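(* There exists a function $\ell\in C^2(\overline{\mathcal{S}})$ with $\ell<0$ on $\overline{\mathcal{S}}$ and $\ell(x,y)\to-\infty$ as $\|(x,y)\|\to\infty$ within $\overline{\mathcal{S}}$, which is a strict classical subsolution of the HJB inequality in $\mathcal{S}$, i.e. for all $(x,y)\in\mathcal{S}$: $$\mathcal{L}\ell(x,y)<0,\qquad -(1-\mu)\ell_x(x,y)+\ell_y(x,y)<0,\qquad \ell_x(x,y)-(1-\lambda)\ell_y(x,y)<0.$$ (For instance, $\ell(x,y)=-\frac{(x+ky-b+1)^p}{p}$ with any $k\in(1-\mu,\frac{1}{1-\lambda})$ and $p\in(0,1)$ sufficiently small.)
   Context: Constants $r>0$, $\alpha>r$, $\sigma>0$, $\beta>0$, $\lambda,\mu\in(0,1)$, $c>0$, $b<c/r$. $L(x,y):=x+(1-\mu)y^+-\frac{1}{1-\lambda}y^-$, $\mathcal{S}_a:=\{(x,y)\in\mathbb{R}^2:L(x,y)>a\}$, $\mathcal{S}:=\mathcal{S}_b\setminus\overline{\mathcal{S}_{c/r}}$ (closures in $\mathbb{R}^2$). For $\varphi\in C^2$, $\mathcal{L}\varphi:=\beta\varphi-(rx-c)\varphi_x-\alpha y\varphi_y-\frac12\sigma^2y^2\varphi_{yy}$. *)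

From Stdlib Require Import Reals Lra.
Open Scope R_scope.

Definition Lfun (lam mu x y : R) : R :=
  x + (1 - mu) * Rmax y 0 - / (1 - lam) * Rmax (- y) 0.

(* S = S_b \ closure(S_{c/r}) ; since L is continuous and strictly increasing
   in x, closure(S_{c/r}) = {L >= c/r}, so S = {b < L < c/r}.  We nevertheless
   define it literally with the topological closure. *)
Definition in_closure (P : R -> R -> Prop) (x y : R) : Prop :=
  forall eps, 0 < eps -> exists x' y', P x' y' /\ (x' - x)^2 + (y' - y)^2 < eps^2.

Definition S_a (lam mu a : R) (x y : R) : Prop := Lfun lam mu x y > a.

Definition Sset (lam mu b c r : R) (x y : R) : Prop :=
  S_a lam mu b x y /\ ~ in_closure (S_a lam mu (c / r)) x y.

Definition open2 (U : R -> R -> Prop) : Prop :=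
  forall x y, U x y -> exists eps, 0 < eps /\
    forall x' y', (x' - x)^2 + (y' - y)^2 < eps^2 -> U x' y'.

Definition cont2_on (U : R -> R -> Prop) (g : R -> R -> R) : Prop :=
  forall x y, U x y -> forall eps, 0 < eps -> exists del, 0 < del /\
    forall x' y', U x' y' -> (x' - x)^2 + (y' - y)^2 < del^2 ->
      Rabs (g x' y' - g x y) < eps.

Definition C2_on (U : R -> R -> Prop) (f fx fy fxx fxy fyx fyy : R -> R -> R) : Prop :=
  (forall x y, U x y ->
     derivable_pt_lim (fun t => f t y) x (fx x y) /\
     derivable_pt_lim (fun t => f x t) y (fy x y) /\
     derivable_pt_lim (fun t => fx t y) x (fxx x y) /\
     derivable_pt_lim (fun t => fx x t) y (fxy x y) /\
     derivable_pt_lim (fun t => fy t y) x (fyx x y) /\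
     derivable_pt_lim (fun t => fy x t) y (fyy x y)) /\
  cont2_on U f /\ cont2_on U fx /\ cont2_on U fy /\
  cont2_on U fxx /\ cont2_on U fxy /\ cont2_on U fyx /\ cont2_on U fyy.

Definition Lop (beta r c alpha sigma : R) (f fx fy fyy : R -> R -> R) (x y : R) : R :=
  beta * f x y - (r * x - c) * fx x y - alpha * y * fy x y
  - / 2 * sigma ^ 2 * y ^ 2 * fyy x y.

(** The candidate is [l = - ln (x + k y + d)], a logarithmic barrier along the
    line whose slope [k] lies halfway between the two slopes [1 - mu] and
    [1/(1-lam)] of the broken line [L = const].  With this choice
    [x + k y = L(x,y) + g |y|] for the half gap [g > 0], so on the closure of
    [S] the argument [z = x + k y + d] grows at least like [g |y|], while the
    first-order part of the generator, [(r x - c + alpha k y) / z], is at most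
    [A |y| / z] (with [A = drift_bound]) because [L <= c/r] on [S].  Taking
    [d] so large that [beta ln z] exceeds [A / g] makes the zeroth-order term
    [- beta ln z] dominate; the diffusion term has the right sign, and the two
    gradient constraints reduce to [1 - mu < k < 1/(1-lam)]. *)

From Stdlib Require Import Reals Lra.
From Coquelicot Require Import Coquelicot.
Open Scope R_scope.

Definition affine (k d x y : R) : R := x + k * y + d.

Lemma abs_linear_increment_le (a c x y x' y' e : R) :
  0 < e -> (x' - x)^2 + (y' - y)^2 < e^2 ->
  Rabs (a * (x' - x) + c * (y' - y)) <= (Rabs a + Rabs c) * e.
Proof.
  intros He Hd.
  assert (Hcoord : forall u, u^2 < e^2 -> Rabs u <= e)
    by (intros u Hu; apply Rabs_le; split; nra).
  pose proof (pow2_ge_0 (x' - x)). pose proof (pow2_ge_0 (y' - y)).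
  assert (Hx : Rabs (x' - x) <= e) by (apply Hcoord; lra).
  assert (Hy : Rabs (y' - y) <= e) by (apply Hcoord; lra).
  pose proof (Rabs_pos a). pose proof (Rabs_pos c).
  eapply Rle_trans; [apply Rabs_triang|].
  rewrite !Rabs_mult. nra.
Qed.

Lemma in_closure_self (P : R -> R -> Prop) (x y : R) : P x y -> in_closure P x y.
Proof. intros HP eps He. exists x, y. split; [exact HP | nra]. Qed.

Lemma in_closure_linear_ge0 (P : R -> R -> Prop) (a c d : R) :
  (forall x y, P x y -> 0 <= a * x + c * y + d) ->
  forall x y, in_closure P x y -> 0 <= a * x + c * y + d.
Proof.
  intros HP x y Hcl.
  destruct (Rle_lt_dec 0 (a * x + c * y + d)) as [Hge | Hlt]; [exact Hge|].
  pose proof (Rabs_pos a). pose proof (Rabs_pos c).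
  set (e := - (a * x + c * y + d) / (Rabs a + Rabs c + 1)).
  assert (He : 0 < e) by (unfold e; apply Rdiv_lt_0_compat; lra).
  assert (Hscale : (Rabs a + Rabs c + 1) * e = - (a * x + c * y + d))
    by (unfold e; field; lra).
  destruct (Hcl e He) as [x' [y' [HP' Hd]]].
  pose proof (abs_linear_increment_le a c x y x' y' e He Hd).
  pose proof (Rle_abs (a * (x' - x) + c * (y' - y))).
  pose proof (HP _ _ HP').
  nra.
Qed.

Lemma open2_affine_pos (k d : R) : open2 (fun x y => 0 < affine k d x y).
Proof.
  unfold affine. intros x y Hz.
  pose proof (Rabs_pos k).
  set (e := (x + k * y + d) / (2 * (1 + Rabs k))).
  assert (He : 0 < e) by (unfold e; apply Rdiv_lt_0_compat; lra).
  assert (Hscale : (1 + Rabs k) * e = (x + k * y + d) / 2) by (unfold e; field; lra).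
  exists e. split; [exact He|]. intros x' y' Hd.
  pose proof (abs_linear_increment_le 1 k x y x' y' e He Hd) as Hinc.
  rewrite Rabs_R1 in Hinc.
  pose proof (Rle_abs (- (1 * (x' - x) + k * (y' - y)))) as Hneg.
  rewrite Rabs_Ropp in Hneg.
  lra.
Qed.

Lemma cont2_on_comp_affine (G : R -> R) (k d : R) :
  (forall t, 0 < t -> continuity_pt G t) ->
  cont2_on (fun x y => 0 < affine k d x y) (fun x y => G (affine k d x y)).
Proof.
  unfold affine. intros HG x y Hz eps Heps.
  destruct (HG _ Hz eps Heps) as [alp [Halp HGalp]].
  pose proof (Rabs_pos k).
  set (e := alp / (2 * (1 + Rabs k))).
  assert (He : 0 < e) by (unfold e; apply Rdiv_lt_0_compat; lra).
  assert (Hscale : (1 + Rabs k) * e = alp / 2) by (unfold e; field; lra).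
  exists e. split; [exact He|]. intros x' y' _ Hd.
  pose proof (abs_linear_increment_le 1 k x y x' y' e He Hd) as Hinc.
  rewrite Rabs_R1 in Hinc.
  destruct (Req_dec (x + k * y + d) (x' + k * y' + d)) as [Heq | Hneq].
  - rewrite <- Heq, Rminus_diag, Rabs_R0. exact Heps.
  - apply HGalp. split; [split; [exact I | exact Hneq]|].
    simpl. unfold R_dist.
    replace (x' + k * y' + d - (x + k * y + d)) with (1 * (x' - x) + k * (y' - y))
      by ring.
    lra.
Qed.

Lemma C2_on_neg_ln_affine (k d : R) :
  C2_on (fun x y => 0 < affine k d x y)
    (fun x y => - ln (affine k d x y))
    (fun x y => - / affine k d x y)
    (fun x y => - (k * / affine k d x y))
    (fun x y => / affine k d x y ^ 2)
    (fun x y => k * / affine k d x y ^ 2)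
    (fun x y => k * / affine k d x y ^ 2)
    (fun x y => k ^ 2 * / affine k d x y ^ 2).
Proof.
  assert (Hcont : forall G : R -> R, (forall t, 0 < t -> ex_derive G t) ->
            cont2_on (fun x y => 0 < affine k d x y) (fun x y => G (affine k d x y))).
  { intros G HG. apply cont2_on_comp_affine. intros t Ht.
    apply continuity_pt_filterlim, (@ex_derive_continuous R_AbsRing R_NormedModule).
    exact (HG t Ht). }
  unfold C2_on. split.
  - unfold affine. intros x y Hz. repeat split;
      (apply is_derive_Reals; auto_derive; [repeat split; lra | field; lra]).
  - repeat split;
      [ refine (Hcont (fun t => - ln t) _)
      | refine (Hcont (fun t => - / t) _)
      | refine (Hcont (fun t => - (k * / t)) _)
      | refine (Hcont (fun t => / t ^ 2) _)
      | refine (Hcont (fun t => k * / t ^ 2) _)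
      | refine (Hcont (fun t => k * / t ^ 2) _)
      | refine (Hcont (fun t => k ^ 2 * / t ^ 2) _) ];
      intros t Ht; auto_derive; nra.
Qed.

Lemma Lop_neg_ln_affine (beta r c alpha sigma k d x y : R) :
  0 < affine k d x y ->
  Lop beta r c alpha sigma
    (fun x y => - ln (affine k d x y))
    (fun x y => - / affine k d x y)
    (fun x y => - (k * / affine k d x y))
    (fun x y => k ^ 2 * / affine k d x y ^ 2) x y
  = - beta * ln (affine k d x y)
    + (r * x - c + alpha * k * y) / affine k d x y
    - / 2 * (sigma * y * k / affine k d x y) ^ 2.
Proof. intros Hz. unfold Lop. field. lra. Qed.

(** If [z] exceeds [exp (A / (beta g) + 1)] by at least [g Y], then
    [beta z ln z >= beta (A / (beta g) + 1) z > A Y]. *)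
Lemma linear_lt_beta_mul_ln (beta g A Y N z : R) :
  0 < beta -> 0 < g -> 0 <= A -> 0 <= Y -> N <= A * Y ->
  exp (A / (beta * g) + 1) + g * Y <= z ->
  N < beta * z * ln z.
Proof.
  intros Hbeta Hg HA HY HN Hz.
  set (q := A / (beta * g)) in *.
  assert (Hq : 0 <= q) by (unfold q; apply Rdiv_le_0_compat; nra).
  assert (Hqg : beta * q * g = A) by (unfold q; field; lra).
  pose proof (exp_pos (q + 1)) as HD.
  assert (HgY : 0 <= g * Y) by (apply Rmult_le_pos; lra).
  assert (Hln : q + 1 <= ln z).
  { rewrite <- (ln_exp (q + 1)). apply ln_le; lra. }
  assert (HzY : beta * (q + 1) * (exp (q + 1) + g * Y) <= beta * (q + 1) * z)
    by (apply Rmult_le_compat_l; nra).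
  assert (Hzln : beta * (q + 1) * z <= beta * z * ln z).
  { replace (beta * (q + 1) * z) with (beta * z * (q + 1)) by ring.
    apply Rmult_le_compat_l; [nra | exact Hln]. }
  assert (0 < beta * (q + 1) * exp (q + 1)) by (apply Rmult_lt_0_compat; nra).
  assert (0 <= beta * (g * Y)) by (apply Rmult_le_pos; lra).
  nra.
Qed.

Lemma cone_coercive (k g b W : R) : 0 < g ->
  exists R0, forall x y, g * Rabs y <= x + k * y - b ->
    x ^ 2 + y ^ 2 > R0 ^ 2 -> W < x + k * y - b.
Proof.
  intros Hg.
  set (W' := Rmax W 0).
  assert (HW' : W <= W' /\ 0 <= W') by (split; [apply Rmax_l | apply Rmax_r]).
  set (Y := W' / g).
  assert (HY : Y * g = W') by (unfold Y; field; lra).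
  assert (HY0 : 0 <= Y) by (unfold Y; apply Rdiv_le_0_compat; lra).
  set (X := W' + Rabs k * Y + Rabs b).
  exists (X + Y). intros x y Hcone Hbig.
  destruct (Rle_lt_dec (x + k * y - b) W) as [Hle | Hlt]; [exfalso | exact Hlt].
  pose proof (Rabs_pos y). pose proof (Rabs_pos k). pose proof (Rabs_pos b).
  assert (Hy : Rabs y <= Y) by (apply (Rmult_le_reg_l g); lra).
  assert (Hky : Rabs (k * y) <= Rabs k * Y)
    by (rewrite Rabs_mult; apply Rmult_le_compat_l; lra).
  pose proof (Rle_abs (k * y)). pose proof (Rle_abs (- (k * y))).
  pose proof (Rle_abs b). pose proof (Rle_abs (- b)).
  rewrite Rabs_Ropp in *.
  assert (0 <= g * Rabs y) by (apply Rmult_le_pos; lra).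
  assert (Hx : Rabs x <= X) by (unfold X; apply Rabs_le; split; lra).
  pose proof (Rabs_pos x).
  assert (x ^ 2 <= X ^ 2) by (rewrite <- (pow2_abs x); nra).
  assert (y ^ 2 <= Y ^ 2) by (rewrite <- (pow2_abs y); nra).
  nra.
Qed.

Section BrokenLine.

Variables lam mu : R.

Definition mid_slope : R := ((1 - mu) + / (1 - lam)) / 2.
Definition half_gap : R := (/ (1 - lam) - (1 - mu)) / 2.

Lemma Lfun_mid_slope (x y : R) :
  x + mid_slope * y = Lfun lam mu x y + half_gap * Rabs y.
Proof.
  unfold Lfun, mid_slope, half_gap.
  destruct (Rle_lt_dec 0 y).
  - rewrite Rmax_left, Rmax_right, Rabs_right by lra. lra.
  - rewrite Rmax_right, Rmax_left, Rabs_left by lra. lra.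
Qed.

Hypotheses (Hlam : 0 < lam < 1) (Hmu : 0 < mu < 1).

Lemma mid_slope_bounds : 1 - mu < mid_slope /\ (1 - lam) * mid_slope < 1.
Proof.
  assert (Hinv : (1 - lam) * / (1 - lam) = 1) by (field; lra).
  assert (1 < / (1 - lam)) by nra.
  unfold mid_slope. split; nra.
Qed.

Lemma half_gap_pos : 0 < half_gap.
Proof. pose proof mid_slope_bounds. unfold mid_slope, half_gap in *. lra. Qed.

Variables r c b : R.

Lemma Sset_Lfun_bounds (x y : R) :
  Sset lam mu b c r x y -> b < Lfun lam mu x y <= c / r.
Proof.
  intros [Hb Hcr]. split; [exact Hb|].
  apply Rnot_lt_le. intros Hlt. apply Hcr, in_closure_self. exact Hlt.
Qed.

Lemma closure_Sset_cone (x y : R) :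
  in_closure (Sset lam mu b c r) x y -> half_gap * Rabs y <= x + mid_slope * y - b.
Proof.
  intros Hcl.
  assert (Hcone : forall s, s = 1 \/ s = -1 -> forall x y, Sset lam mu b c r x y ->
            0 <= 1 * x + (mid_slope - s * half_gap) * y + - b).
  { intros s Hs x0 y0 HS.
    pose proof (Sset_Lfun_bounds x0 y0 HS). pose proof (Lfun_mid_slope x0 y0).
    pose proof half_gap_pos. pose proof (Rle_abs y0). pose proof (Rle_abs (- y0)).
    rewrite Rabs_Ropp in *. destruct Hs; subst s; nra. }
  pose proof (in_closure_linear_ge0 _ _ _ _ (Hcone 1 (or_introl eq_refl)) x y Hcl).
  pose proof (in_closure_linear_ge0 _ _ _ _ (Hcone (-1) (or_intror eq_refl)) x y Hcl).
  destruct (Rle_dec 0 y).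
  - rewrite Rabs_right by lra. nra.
  - rewrite Rabs_left by lra. nra.
Qed.

(** From [x = L + g |y| - k y] and [r L <= c]. *)
Lemma Sset_drift_le (alpha : R) (x y : R) : 0 < r ->
  Sset lam mu b c r x y ->
  r * x - c + alpha * mid_slope * y
  <= (r * half_gap + Rabs ((alpha - r) * mid_slope)) * Rabs y.
Proof.
  intros Hr HS.
  pose proof (Sset_Lfun_bounds x y HS) as [_ HL].
  pose proof (Lfun_mid_slope x y).
  assert (HrL : r * Lfun lam mu x y <= c).
  { replace c with (r * (c / r)) by (field; lra). apply Rmult_le_compat_l; lra. }
  assert (Hdrift : (alpha - r) * mid_slope * y <= Rabs ((alpha - r) * mid_slope) * Rabs y)
    by (rewrite <- Rabs_mult; apply Rle_abs).
  nra.
Qed.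

End BrokenLine.

Section LogBarrier.

Variables r alpha sigma beta lam mu c b : R.
Hypotheses (Hr : 0 < r) (Hbeta : 0 < beta) (Hlam : 0 < lam < 1) (Hmu : 0 < mu < 1).

Let k := mid_slope lam mu.
Let g := half_gap lam mu.

Definition drift_bound : R := r * g + Rabs ((alpha - r) * k).
Definition barrier_level : R := exp (drift_bound / (beta * g) + 1).
Let d := barrier_level - b.

Lemma barrier_level_gt1 : 1 < barrier_level.
Proof.
  pose proof (half_gap_pos lam mu Hlam Hmu).
  pose proof (Rabs_pos ((alpha - r) * k)).
  assert (0 <= drift_bound / (beta * g))
    by (apply Rdiv_le_0_compat; unfold drift_bound, g in *; nra).
  rewrite <- exp_0. apply exp_increasing. lra.
Qed.

Lemma closure_Sset_barrier_ge (x y : R) : in_closure (Sset lam mu b c r) x y ->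
  barrier_level + g * Rabs y <= affine k d x y.
Proof.
  intros H. pose proof (closure_Sset_cone lam mu Hlam Hmu r c b x y H) as Hcone.
  unfold d, affine. fold k g in Hcone. lra.
Qed.

Lemma closure_Sset_barrier_gt1 (x y : R) : in_closure (Sset lam mu b c r) x y ->
  1 < affine k d x y.
Proof.
  intros H. pose proof (closure_Sset_barrier_ge x y H). pose proof barrier_level_gt1.
  pose proof (half_gap_pos lam mu Hlam Hmu). pose proof (Rabs_pos y).
  assert (0 <= g * Rabs y) by (apply Rmult_le_pos; unfold g; lra).
  lra.
Qed.

Lemma neg_ln_barrier_lt0 (x y : R) : in_closure (Sset lam mu b c r) x y ->
  - ln (affine k d x y) < 0.
Proof.
  intros H. pose proof (closure_Sset_barrier_gt1 x y H).
  pose proof (ln_increasing 1 (affine k d x y) ltac:(lra) ltac:(lra)).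
  rewrite ln_1 in *. lra.
Qed.

Lemma neg_ln_barrier_coercive (M : R) : exists R0, forall x y,
  in_closure (Sset lam mu b c r) x y -> x ^ 2 + y ^ 2 > R0 ^ 2 ->
  - ln (affine k d x y) < M.
Proof.
  destruct (cone_coercive k g b (exp (- M) - barrier_level) (half_gap_pos lam mu Hlam Hmu))
    as [R0 HR0].
  exists R0. intros x y H Hbig.
  pose proof (HR0 x y (closure_Sset_cone lam mu Hlam Hmu r c b x y H) Hbig).
  pose proof (exp_pos (- M)).
  pose proof (ln_increasing (exp (- M)) (affine k d x y) ltac:(lra)
                ltac:(unfold d, affine; lra)).
  rewrite ln_exp in *. lra.
Qed.

Lemma neg_ln_barrier_subsolution (x y : R) : Sset lam mu b c r x y ->
  Lop beta r c alpha sigma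
    (fun x y => - ln (affine k d x y)) (fun x y => - / affine k d x y)
    (fun x y => - (k * / affine k d x y))
    (fun x y => k ^ 2 * / affine k d x y ^ 2) x y < 0 /\
  - (1 - mu) * - / affine k d x y + - (k * / affine k d x y) < 0 /\
  - / affine k d x y - (1 - lam) * - (k * / affine k d x y) < 0.
Proof.
  intros HS.
  pose proof (closure_Sset_barrier_ge x y (in_closure_self _ x y HS)) as Hzy.
  pose proof (closure_Sset_barrier_gt1 x y (in_closure_self _ x y HS)) as Hz1.
  rewrite Lop_neg_ln_affine by lra.
  set (z := affine k d x y) in *.
  assert (Hiz : 0 < / z) by (apply Rinv_0_lt_compat; lra).
  pose proof (mid_slope_bounds lam mu Hlam Hmu) as Hk. fold k in Hk.
  pose proof (half_gap_pos lam mu Hlam Hmu) as Hg. fold g in Hg.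
  assert (Hdrift : (r * x - c + alpha * k * y) / z < beta * ln z).
  { assert (r * x - c + alpha * k * y < beta * z * ln z).
    { apply (linear_lt_beta_mul_ln beta g drift_bound (Rabs y)); auto.
      - pose proof (Rabs_pos ((alpha - r) * k)). unfold drift_bound. nra.
      - apply Rabs_pos.
      - exact (Sset_drift_le lam mu r c b alpha x y Hr HS). }
    apply (Rmult_lt_reg_r z); [lra|].
    replace ((r * x - c + alpha * k * y) / z * z) with (r * x - c + alpha * k * y)
      by (field; lra).
    lra. }
  pose proof (pow2_ge_0 (sigma * y * k / z)).
  assert (0 < (k - (1 - mu)) * / z) by (apply Rmult_lt_0_compat; lra).
  assert (0 < (1 - (1 - lam) * k) * / z) by (apply Rmult_lt_0_compat; lra).
  split; [lra | split; lra].
Qed.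

End LogBarrier.

Theorem mainTheorem13 :
  forall (r alpha sigma beta lam mu c b : R),
    0 < r -> alpha > r -> 0 < sigma -> 0 < beta ->
    0 < lam < 1 -> 0 < mu < 1 -> 0 < c -> b < c / r ->
    exists (l lx ly lxx lxy lyx lyy : R -> R -> R) (U : R -> R -> Prop),
      open2 U /\
      (forall x y, in_closure (Sset lam mu b c r) x y -> U x y) /\
      C2_on U l lx ly lxx lxy lyx lyy /\
      (forall x y, in_closure (Sset lam mu b c r) x y -> l x y < 0) /\
      (forall M, exists R0, forall x y, in_closure (Sset lam mu b c r) x y ->
          x ^ 2 + y ^ 2 > R0 ^ 2 -> l x y < M) /\
      (forall x y, Sset lam mu b c r x y ->
          Lop beta r c alpha sigma l lx ly lyy x y < 0 /\
          - (1 - mu) * lx x y + ly x y < 0 /\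
          lx x y - (1 - lam) * ly x y < 0).
Proof.
  intros r alpha sigma beta lam mu c b Hr _ _ Hbeta Hlam Hmu _ _.
  set (k := mid_slope lam mu).
  set (d := barrier_level r alpha beta lam mu - b).
  exists (fun x y => - ln (affine k d x y)),
    (fun x y => - / affine k d x y),
    (fun x y => - (k * / affine k d x y)),
    (fun x y => / affine k d x y ^ 2),
    (fun x y => k * / affine k d x y ^ 2),
    (fun x y => k * / affine k d x y ^ 2),
    (fun x y => k ^ 2 * / affine k d x y ^ 2),
    (fun x y => 0 < affine k d x y).
  split; [apply open2_affine_pos|].
  split.
  { intros x y H.
    pose proof (closure_Sset_barrier_gt1 r alpha beta lam mu c b Hr Hbeta Hlam Hmu x y H)
      as Hz.
    fold k d in Hz. lra. }
  split; [apply C2_on_neg_ln_affine|].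
  split; [exact (neg_ln_barrier_lt0 r alpha beta lam mu c b Hr Hbeta Hlam Hmu)|].
  split; [exact (neg_ln_barrier_coercive r alpha beta lam mu c b Hlam Hmu)|].
  exact (neg_ln_barrier_subsolution r alpha sigma beta lam mu c b Hr Hbeta Hlam Hmu).
Qed.
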